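(* Let $\lambda$ be an uncountable regular cardinal, and suppose $S=\langle I\times\kappa,\mathcal{R}\rangle$ is a $\lambda$-system with no cofinal branch. Suppose $\mathrm{width}(S)=\kappa'$. Then there is a $\lambda$-system $S'=\langle I\times\kappa',\mathcal{R}'\rangle$ with no cofinal branch such that $|\mathcal{R}'|=1$.
   Context: A binary relation $R$ is tree-like if whenever $a<_Rc$ and $b<_Rc$, then $a,b$ are $R$-comparable ($a=b$, $a<_Rb$ or $b<_Ra$). For a cardinal $0<\kappa<\lambda$, a $\lambda$-system $\langle I\times\kappa,\mathcal{R}\rangle$ consists of an unbounded $I\subseteq\lambda$ (levels $S_\alpha=\{\alpha\}\times\kappa$, $\alpha\in I$) and a set $\mathcal{R}$ of binary, transitive, tree-like relations on $I\times\kappa$ with $0<|\mathcal{R}|<\lambda$, such that if $(\alpha_0,\beta_0)<_R(\alpha_1,\beta_1)$ for $R\in\mathcal{R}$ then $\alpha_0<\alpha_1$, and for all $\alpha_0<\alpha_1$ in $I$ there are $\beta_0,\beta_1<\kappa$ and $R\in\mathcal{R}$ with $(\alpha_0,\beta_0)<_R(\alpha_1,\beta_1)$. $\mathrm{width}(S)=\max(\kappa,|\mathcal{R}|)$. A branch through $R\in\mathcal{R}$ is a set of pairwise $R$-comparable elements; it is cofinal if it meets $S_\alpha$ for unboundedly many $\alpha\in I$; $S$ has a cofinal branch if some $R\in\mathcal{R}$ has a cofinal branch. *)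

From Stdlib Require Import Classical.

Definition inj_le (A B : Type) : Prop :=
  exists f : A -> B, forall x y, f x = f y -> x = y.

Definition card_lt (A B : Type) : Prop := inj_le A B /\ ~ inj_le B A.

(* (L, lt) represents an uncountable regular cardinal lambda, viewed as the
   well-ordered set of its ordinals (von Neumann style): a strict well-order
   every proper initial segment of which has smaller cardinality, which is
   uncountable, and in which every subset of size < lambda is bounded. *)
Record uncountable_regular_cardinal (L : Type) (lt : L -> L -> Prop) : Prop := {
  urc_trans : forall x y z, lt x y -> lt y z -> lt x z;
  urc_total : forall x y, x = y \/ lt x y \/ lt y x;
  urc_wf : well_founded lt;
  urc_initial : forall a : L, ~ inj_le L {x : L | lt x a};
  urc_uncountable : ~ inj_le L nat;
  urc_regular : forall X : L -> Prop, ~ inj_le L {x : L | X x} ->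
                  exists b : L, forall x, X x -> lt x b
}.

Definition node (L : Type) (I : L -> Prop) (K : Type) : Type :=
  ({a : L | I a} * K)%type.

Definition level {L : Type} {I : L -> Prop} {K : Type} (p : node L I K) : L :=
  proj1_sig (fst p).

Definition tree_like {X : Type} (R : X -> X -> Prop) : Prop :=
  forall a b c, R a c -> R b c -> a = b \/ R a b \/ R b a.

Definition transitive_rel {X : Type} (R : X -> X -> Prop) : Prop :=
  forall a b c, R a b -> R b c -> R a c.

Definition lambda_system (L : Type) (lt : L -> L -> Prop) (I : L -> Prop)
    (K : Type) (Rs : (node L I K -> node L I K -> Prop) -> Prop) : Prop :=
  inhabited K /\ card_lt K L /\
  inhabited {R | Rs R} /\ card_lt {R | Rs R} L /\
  (forall a : L, exists b : L, I b /\ ~ lt b a) /\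
  (forall R, Rs R ->
     transitive_rel R /\ tree_like R /\
     (forall p q, R p q -> lt (level p) (level q))) /\
  (forall (a0 a1 : {a : L | I a}), lt (proj1_sig a0) (proj1_sig a1) ->
     exists (b0 b1 : K) R, Rs R /\ R (a0, b0) (a1, b1)).

Definition has_cofinal_branch (L : Type) (lt : L -> L -> Prop) (I : L -> Prop)
    (K : Type) (Rs : (node L I K -> node L I K -> Prop) -> Prop) : Prop :=
  exists R, Rs R /\
    exists B : node L I K -> Prop,
      (forall p q, B p -> B q -> p = q \/ R p q \/ R q p) /\
      (forall a : L, exists p, B p /\ ~ lt (level p) a).

Definition card_is_max (K' K Ridx : Type) : Prop :=
  inj_le K K' /\ inj_le Ridx K' /\ (inj_le K' K \/ inj_le K' Ridx).

(* If K' is finite then so are K and R, and a lambda-system of finite width always has a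
   cofinal branch.  Indeed, by transfinite recursion choose at each level x a triple
   t_x = (k, R, j) such that, jointly with the choices at any finitely many lower levels,
   unboundedly many nodes (g, j) lie R-above (x, k); the recursion never gets stuck since,
   there being finitely many triples, the obstructions are bounded by regularity.  Some triple
   is chosen on an unbounded set of levels, and the nodes (x, k) at these levels form a
   branch by tree-likeness.

   If K' is infinite then |K' x K'| = |K'| (Hessenberg: collapse the Goedel well-order of
   pairs), so K x R embeds into K' by some e, and the single relation relating
   (a, e (k, R)) to (b, e (k', R)) exactly when (a, k) <_R (b, k') is a lambda-system
   whose cofinal branches come from cofinal branches of one relation R of S. *)

From Stdlib Require Import Classical ClassicalEpsilon List Arith Wellfounded FunctionalExtensionality.

Lemma sig_eq {A} {P : A -> Prop} (x y : sig P) : proj1_sig x = proj1_sig y -> x = y.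
Proof. destruct x, y; simpl; intros; subst; f_equal; apply proof_irrelevance. Qed.

Lemma inj_le_trans A B C : inj_le A B -> inj_le B C -> inj_le A C.
Proof. intros [f Hf] [g Hg]. exists (fun x => g (f x)); auto. Qed.

Lemma inj_le_prod A A' B B' : inj_le A A' -> inj_le B B' -> inj_le (A * B) (A' * B').
Proof.
  intros [f Hf] [g Hg]. exists (fun p => (f (fst p), g (snd p))).
  intros [] [] E; simpl in E; injection E; intros; f_equal; auto.
Qed.

Lemma inj_le_sig_incl A (P Q : A -> Prop) : (forall x, P x -> Q x) -> inj_le {x | P x} {x | Q x}.
Proof.
  intros HPQ. exists (fun x => exist Q (proj1_sig x) (HPQ _ (proj2_sig x))).
  intros x y E. apply sig_eq. exact (f_equal (@proj1_sig _ _) E).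
Qed.

Lemma inj_le_of_surj A B (f : A -> B) : (forall b, exists a, f a = b) -> inj_le B A.
Proof.
  intros Hf. exists (fun b => proj1_sig (constructive_indefinite_description _ (Hf b))).
  intros b b' E.
  destruct (constructive_indefinite_description _ (Hf b)) as [a Ha].
  destruct (constructive_indefinite_description _ (Hf b')) as [a' Ha'].
  simpl in E. congruence.
Qed.

Definition finite_type (X : Type) : Prop := exists l : list X, forall x, In x l.

Lemma finite_inj_le A B : inj_le A B -> finite_type B -> finite_type A.
Proof.
  intros [f Hf] [l Hl]. destruct (classic (inhabited A)) as [inhA|HA].
  - pose (g y := epsilon inhA (fun x => f x = y)).
    exists (map g l). intros x. replace x with (g (f x)); [apply in_map, Hl|].
    apply Hf. exact (epsilon_spec inhA (fun x' => f x' = f x) (ex_intro _ x eq_refl)).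
  - exists nil. intros x. destruct (HA (inhabits x)).
Qed.

Lemma finite_option A : finite_type A -> finite_type (option A).
Proof.
  intros [l Hl]. exists (None :: map Some l).
  intros [a|]; simpl; auto using in_map.
Qed.

Lemma finite_prod A B : finite_type A -> finite_type B -> finite_type (A * B).
Proof. intros [l Hl] [l' Hl']. exists (list_prod l l'). intros [a b]; apply in_prod; auto. Qed.

Lemma finite_inj_le_nat X : finite_type X -> inj_le X nat.
Proof.
  intros [l Hl].
  exists (fun x => epsilon (inhabits 0) (fun n => nth_error l n = Some x)).
  intros x y E.
  pose proof (epsilon_spec (inhabits 0) _ (In_nth_error l x (Hl x))) as Ex.
  pose proof (epsilon_spec (inhabits 0) _ (In_nth_error l y (Hl y))) as Ey.
  simpl in Ex, Ey. rewrite E, Ey in Ex. congruence.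
Qed.

Lemma not_finite_inj_le_nat X : ~ finite_type X -> inj_le nat X.
Proof.
  intros HX.
  assert (inhX : inhabited X).
  { apply NNPP. intros HnX. apply HX. exists nil. intros x. exact (HnX (inhabits x)). }
  assert (Hnew : forall l : list X, exists x, ~ In x l).
  { intros l. apply NNPP. intros Hn. apply HX. exists l. intros x.
    apply NNPP. intros Hx. eauto. }
  pose (fresh l := epsilon inhX (fun x => ~ In x l)).
  pose (g := fix g (n : nat) : list X := match n with 0 => nil | S n => fresh (g n) :: g n end).
  assert (Hfresh : forall n, ~ In (fresh (g n)) (g n)).
  { intros n. exact (epsilon_spec inhX _ (Hnew (g n))). }
  assert (Hmono : forall n m, n < m -> In (fresh (g n)) (g m)).
  { intros n m Hnm. induction Hnm; simpl; auto. }
  exists (fun n => fresh (g n)).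
  intros n m E. destruct (Nat.lt_trichotomy n m) as [H|[H|H]]; auto; exfalso.
  - apply (Hfresh m). rewrite <- E. auto.
  - apply (Hfresh n). rewrite E. auto.
Qed.

(* The shift along an injected copy of nat frees the point [f 0] for [None]. *)
Lemma not_finite_option_inj_le X : ~ finite_type X -> inj_le (option X) X.
Proof.
  intros HX. destruct (not_finite_inj_le_nat X HX) as [f Hf].
  pose (shift x := match excluded_middle_informative (exists n, f n = x) with
                   | left H => f (S (proj1_sig (constructive_indefinite_description _ H)))
                   | right _ => x end).
  assert (Hshift : forall x, (exists n, x = f n /\ shift x = f (S n)) \/
                             ((forall n, f n <> x) /\ shift x = x)).
  { intros x. unfold shift. destruct (excluded_middle_informative _) as [H|H].
    - left. destruct (constructive_indefinite_description _ H) as [n <-]. eauto.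
    - right. split; [intros n E; eauto|reflexivity]. }
  assert (Hshift_inj : forall x y, shift x = shift y -> x = y).
  { intros x y E.
    destruct (Hshift x) as [[n [-> Ex]]|[Hx Ex]], (Hshift y) as [[m [-> Ey]]|[Hy Ey]];
      rewrite Ex, Ey in E.
    - apply Hf in E. congruence.
    - destruct (Hy _ E).
    - destruct (Hx _ (eq_sym E)).
    - exact E. }
  assert (Hshift_new : forall x, shift x <> f 0).
  { intros x E. destruct (Hshift x) as [[n [_ Ex]]|[Hx Ex]]; rewrite Ex in E.
    - apply Hf in E. discriminate.
    - exact (Hx 0 (eq_sym E)). }
  exists (fun o => match o with Some x => shift x | None => f 0 end).
  intros [x|] [y|] E; auto.
  - f_equal. auto.
  - destruct (Hshift_new x E).
  - destruct (Hshift_new y (eq_sym E)).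
Qed.

Lemma wf_recursive_choice X T (R : X -> X -> Prop) (P : (X -> T) -> X -> T -> Prop) :
  well_founded R -> inhabited T ->
  (forall c c' x t, (forall y, R y x -> c y = c' y) -> P c x t -> P c' x t) ->
  exists c : X -> T, forall x, (exists t, P c x t) -> P c x (c x).
Proof.
  intros wfR inhT Hloc.
  pose (extend x (h : forall y, R y x -> T) y :=
          match excluded_middle_informative (R y x) with
          | left H => h y H | right _ => epsilon inhT (fun _ => True) end).
  pose (F x h := epsilon inhT (P (extend x h) x)).
  pose (c := Fix wfR (fun _ => T) F).
  assert (Hc : forall x, c x = F x (fun y _ => c y)).
  { intros x. apply (Fix_eq wfR (fun _ => T) F). intros x' h h' Hh.
    replace h' with h; [reflexivity|].
    apply functional_extensionality_dep; intros y.
    apply functional_extensionality_dep; intros Hy. auto. }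
  assert (Hextend : forall x y, R y x -> extend x (fun y _ => c y) y = c y).
  { intros x y Hy. unfold extend. destruct (excluded_middle_informative (R y x)); tauto. }
  exists c. intros x [t Ht].
  apply (Hloc (extend x (fun y _ => c y))); [auto|].
  rewrite (Hc x). apply epsilon_spec. exists t.
  apply (Hloc c); [|exact Ht]. intros y Hy. symmetry. auto.
Qed.
Definition segment {L} (lt : L -> L -> Prop) (a : L) := {x : L | lt x a}.

Definition lex3 {L} (lt : L -> L -> Prop) (p q : L * L * L) : Prop :=
  let '(a1, b1, c1) := p in let '(a2, b2, c2) := q in
  lt a1 a2 \/ (a1 = a2 /\ (lt b1 b2 \/ (b1 = b2 /\ lt c1 c2))).

Definition maxL {L} (lt : L -> L -> Prop) (x y : L) : L :=
  if excluded_middle_informative (lt x y) then y else x.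

Definition godel_key {L} (lt : L -> L -> Prop) {a : L} (p : segment lt a * segment lt a) :=
  let x := proj1_sig (fst p) in let y := proj1_sig (snd p) in (maxL lt x y, x, y).

Definition godel_lt {L} (lt : L -> L -> Prop) {a : L} (p q : segment lt a * segment lt a) :=
  lex3 lt (godel_key lt p) (godel_key lt q).

Section RegularCardinal.

Variables (L : Type) (lt : L -> L -> Prop).
Hypothesis HU : uncountable_regular_cardinal L lt.

Local Notation lte x y := (lt x y \/ x = y).
Local Notation seg := (segment lt).

Let lt_trans : forall x y z, lt x y -> lt y z -> lt x z := urc_trans L lt HU.

Lemma lt_irrefl x : ~ lt x x.
Proof.
  induction (urc_wf L lt HU x) as [x _ IH]. intros H. exact (IH x H H).
Qed.

Lemma lt_asym x y : lt x y -> ~ lt y x.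
Proof. intros H1 H2. exact (lt_irrefl x (lt_trans _ _ _ H1 H2)). Qed.

Lemma lte_lt_trans x y z : lte x y -> lt y z -> lt x z.
Proof. intros [H|<-] H'; eauto. Qed.

Lemma lt_lte_trans x y z : lt x y -> lte y z -> lt x z.
Proof. intros H [H'|<-]; eauto. Qed.

Lemma lte_trans x y z : lte x y -> lte y z -> lte x z.
Proof. intros [H|<-] [H'|<-]; eauto. Qed.

Lemma not_lt_lte x y : ~ lt x y -> lte y x.
Proof. intros H. destruct (urc_total L lt HU x y) as [E|[H1|H1]]; auto. contradiction. Qed.

Lemma L_not_finite : ~ finite_type L.
Proof. intros HL. exact (urc_uncountable L lt HU (finite_inj_le_nat L HL)). Qed.

Lemma L_inhabited : inhabited L.
Proof.
  apply NNPP. intros HnL. apply L_not_finite. exists nil. intros x. exact (HnL (inhabits x)).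
Qed.

Lemma exists_least (P : L -> Prop) : (exists x, P x) -> exists x, P x /\ forall y, P y -> ~ lt y x.
Proof.
  intros [x Hx]. revert Hx. induction (urc_wf L lt HU x) as [x _ IH]. intros Hx.
  destruct (classic (exists y, P y /\ lt y x)) as [[y [Hy Hyx]]|Hn]; eauto.
  exists x. split; eauto.
Qed.

Lemma small_image_bounded A (f : A -> L) : ~ inj_le L A -> exists b, forall a, lt (f a) b.
Proof.
  intros HA. destruct (urc_regular L lt HU (fun x => exists a, f a = x)) as [b Hb].
  - intros HL. apply HA. eapply inj_le_trans; [exact HL|].
    apply (inj_le_of_surj A _ (fun a => exist _ (f a) (ex_intro _ a eq_refl))).
    intros [x [a <-]]. exists a. apply sig_eq. reflexivity.
  - exists b. intros a. apply Hb. eauto.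
Qed.

Lemma finite_image_bounded A (f : A -> L) : finite_type A -> exists b, forall a, lt (f a) b.
Proof.
  intros HA. apply small_image_bounded. intros HL. exact (L_not_finite (finite_inj_le _ _ HL HA)).
Qed.

Lemma exists_gt b : exists c, lt b c.
Proof.
  destruct (finite_image_bounded unit (fun _ => b)) as [c Hc].
  - exists (tt :: nil). intros []. simpl; auto.
  - exists c. exact (Hc tt).
Qed.

Lemma strict_mono_injective P (ltP : P -> P -> Prop) (g : P -> L) :
  (forall p q, p = q \/ ltP p q \/ ltP q p) -> (forall p q, ltP p q -> lt (g p) (g q)) ->
  forall p q, g p = g q -> p = q.
Proof.
  intros Htot Hmono p q E.
  destruct (Htot p q) as [H|[H|H]]; auto; apply Hmono in H; rewrite E in H;
    destruct (lt_irrefl _ H).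
Qed.

(* Each point goes to the least strict upper bound of the images of its predecessors. *)
Lemma order_collapse P (ltP : P -> P -> Prop) :
  well_founded ltP -> (forall p q r, ltP p q -> ltP q r -> ltP p r) ->
  (forall p, ~ inj_le L {q | ltP q p}) ->
  exists g : P -> L, (forall p q, ltP p q -> lt (g p) (g q)) /\
    (forall p z, lt z (g p) -> exists q, ltP q p /\ g q = z).
Proof.
  intros wfP trP smP.
  pose (least_bound (g : P -> L) p z := (forall q, ltP q p -> lt (g q) z) /\
          forall z', (forall q, ltP q p -> lt (g q) z') -> ~ lt z' z).
  destruct (wf_recursive_choice P L ltP least_bound wfP L_inhabited) as [g Hg].
  { intros c c' p z Hcc' [H1 H2]. split.
    - intros q Hq. rewrite <- Hcc'; auto.
    - intros z' Hz'. apply H2. intros q Hq. rewrite Hcc'; auto. }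
  assert (Hspec : forall p, least_bound g p (g p)).
  { intros p. apply Hg.
    destruct (small_image_bounded {q | ltP q p} (fun q => g (proj1_sig q)) (smP p)) as [b Hb].
    apply exists_least. exists b. intros q Hq. exact (Hb (exist _ q Hq)). }
  exists g. split.
  - intros p q H. exact (proj1 (Hspec q) p H).
  - intros p. induction (wfP p) as [p _ IH]. intros z Hz.
    destruct (classic (forall q, ltP q p -> lt (g q) z)) as [Hall|Hn].
    + destruct (proj2 (Hspec p) z Hall Hz).
    + apply not_all_ex_not in Hn. destruct Hn as [q Hq].
      apply imply_to_and in Hq. destruct Hq as [Hqp Hnl].
      destruct (not_lt_lte _ _ Hnl) as [H1| ->]; eauto.
      destruct (IH q Hqp z H1) as [q' [Hq' E]]. eauto.
Qed.

Lemma lte_maxL_l x y : lte x (maxL lt x y).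
Proof. unfold maxL. destruct (excluded_middle_informative (lt x y)); auto. Qed.

Lemma lte_maxL_r x y : lte y (maxL lt x y).
Proof. unfold maxL. destruct (excluded_middle_informative (lt x y)); auto using not_lt_lte. Qed.

Lemma maxL_lt x y a : lt x a -> lt y a -> lt (maxL lt x y) a.
Proof. unfold maxL. destruct (excluded_middle_informative (lt x y)); auto. Qed.

Lemma lex3_wf : well_founded (lex3 lt).
Proof.
  intros [[a b] c]. revert b c.
  induction (urc_wf L lt HU a) as [a _ IHa]. intros b.
  induction (urc_wf L lt HU b) as [b _ IHb]. intros c.
  induction (urc_wf L lt HU c) as [c _ IHc].
  constructor. intros [[a' b'] c'] [H|[-> [H|[-> H]]]]; auto.
Qed.

Lemma lex3_trans p q r : lex3 lt p q -> lex3 lt q r -> lex3 lt p r.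
Proof.
  destruct p as [[a1 b1] c1], q as [[a2 b2] c2], r as [[a3 b3] c3]; simpl.
  intros [H|[-> [H|[-> H]]]] [H'|[-> [H'|[-> H']]]]; eauto 8.
Qed.

Lemma lex3_total p q : p = q \/ lex3 lt p q \/ lex3 lt q p.
Proof.
  pose proof (urc_total L lt HU) as T.
  destruct p as [[a1 b1] c1], q as [[a2 b2] c2]; simpl.
  destruct (T a1 a2) as [->|[H|H]]; [|tauto|tauto].
  destruct (T b1 b2) as [->|[H|H]]; [|tauto|tauto].
  destruct (T c1 c2) as [->|[H|H]]; tauto.
Qed.

Lemma godel_key_injective a (p q : seg a * seg a) : godel_key lt p = godel_key lt q -> p = q.
Proof.
  destruct p as [x y], q as [x' y']. unfold godel_key; simpl. intros E.
  injection E as _ Ex Ey. f_equal; apply sig_eq; assumption.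
Qed.

Lemma godel_lt_wf a : well_founded (@godel_lt L lt a).
Proof. exact (wf_inverse_image _ _ (lex3 lt) (godel_key lt) lex3_wf). Qed.

Lemma godel_lt_trans a (p q r : seg a * seg a) : godel_lt lt p q -> godel_lt lt q r -> godel_lt lt p r.
Proof. apply lex3_trans. Qed.

Lemma godel_lt_total a (p q : seg a * seg a) : p = q \/ godel_lt lt p q \/ godel_lt lt q p.
Proof.
  destruct (lex3_total (godel_key lt p) (godel_key lt q)) as [E|H]; auto.
  left. exact (godel_key_injective a p q E).
Qed.

Lemma closed_segment_option m : inj_le {x | lte x m} (option (seg m)).
Proof.
  exists (fun x => match excluded_middle_informative (lt (proj1_sig x) m) with
           | left H => Some (exist _ (proj1_sig x) H) | right _ => None end).
  intros [x Hx] [y Hy]; simpl.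
  destruct (excluded_middle_informative (lt x m)), (excluded_middle_informative (lt y m));
    intros E; try discriminate; apply sig_eq; simpl.
  - injection E; auto.
  - destruct Hx, Hy; congruence.
Qed.

Lemma godel_predecessors a (p : seg a * seg a) :
  let m := maxL lt (proj1_sig (fst p)) (proj1_sig (snd p)) in
  inj_le {q | godel_lt lt q p} ({x | lte x m} * {x | lte x m}).
Proof.
  intros m.
  assert (Hbound : forall q : seg a * seg a, godel_lt lt q p ->
            lte (proj1_sig (fst q)) m /\ lte (proj1_sig (snd q)) m).
  { intros [[x Hx] [y Hy]] Hq. simpl.
    assert (Hmax : lte (maxL lt x y) m) by (destruct Hq as [H|[H _]]; auto).
    split; [apply (lte_trans _ _ _ (lte_maxL_l x y))|apply (lte_trans _ _ _ (lte_maxL_r x y))];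
      exact Hmax. }
  exists (fun q => (exist (fun x => lte x m) _ (proj1 (Hbound _ (proj2_sig q))),
                    exist (fun x => lte x m) _ (proj2 (Hbound _ (proj2_sig q))))).
  intros [[x y] Hq] [[x' y'] Hq'] E. injection E as Ex Ey.
  apply sig_eq. simpl. f_equal; apply sig_eq; assumption.
Qed.

Lemma inj_le_segment_of_closed_square m :
  (~ finite_type (seg m) -> inj_le (seg m * seg m) (seg m)) ->
  forall X, ~ finite_type X -> inj_le X ({x | lte x m} * {x | lte x m}) -> inj_le X (seg m).
Proof.
  intros Hsq X HX HXm.
  assert (Hopt : inj_le X (option (seg m) * option (seg m))).
  { eapply inj_le_trans; [exact HXm|]. apply inj_le_prod; apply closed_segment_option. }
  destruct (classic (finite_type (seg m))) as [Hfin|Hinf].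
  - destruct HX. eapply finite_inj_le; [exact Hopt|].
    apply finite_prod; apply finite_option; exact Hfin.
  - eapply inj_le_trans; [exact Hopt|]. eapply inj_le_trans; [|exact (Hsq Hinf)].
    apply inj_le_prod; apply not_finite_option_inj_le; exact Hinf.
Qed.

(* Case of an initial ordinal [a]: collapse the Goedel order of pairs below [a]; its
   initial segments are at most |max|^2 < |a|, so the collapse stays below [a]. *)
Lemma segment_square_initial a :
  ~ finite_type (seg a) ->
  (forall a', lt a' a -> ~ inj_le (seg a) (seg a')) ->
  (forall m, lt m a -> ~ finite_type (seg m) -> inj_le (seg m * seg m) (seg m)) ->
  inj_le (seg a * seg a) (seg a).
Proof.
  intros Hinf Hinit IH.
  assert (Hmax : forall p : seg a * seg a, lt (maxL lt (proj1_sig (fst p)) (proj1_sig (snd p))) a).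
  { intros [[x Hx] [y Hy]]. apply maxL_lt; assumption. }
  assert (Hpred : forall (p : seg a * seg a) X, ~ finite_type X -> inj_le X {q | godel_lt lt q p} ->
            inj_le X (seg (maxL lt (proj1_sig (fst p)) (proj1_sig (snd p))))).
  { intros p X HX HXp. apply inj_le_segment_of_closed_square; [auto|exact HX|].
    eapply inj_le_trans; [exact HXp|apply godel_predecessors]. }
  destruct (order_collapse _ (@godel_lt L lt a) (godel_lt_wf a) (godel_lt_trans a)) as [g [Hmono Hdown]].
  { intros p HL. apply (urc_initial L lt HU _ (Hpred p L L_not_finite HL)). }
  assert (Hga : forall p, lt (g p) a).
  { intros p. apply NNPP. intros Hn. apply (Hinit _ (Hmax p)). apply Hpred; [exact Hinf|].
    destruct (choice (fun (z : seg a) (q : {q | godel_lt lt q p}) => g (proj1_sig q) = proj1_sig z))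
      as [f Hf].
    { intros [z Hz]. destruct (Hdown p z) as [q [Hq E]].
      - destruct (not_lt_lte _ _ Hn) as [H| <-]; eauto.
      - exists (exist _ q Hq). exact E. }
    exists f. intros z z' E. apply sig_eq. rewrite <- Hf, <- (Hf z'), E. reflexivity. }
  exists (fun p => exist (fun z => lt z a) (g p) (Hga p)).
  intros p q E. apply (strict_mono_injective _ _ g (godel_lt_total a) Hmono).
  exact (f_equal (@proj1_sig _ _) E).
Qed.

Lemma segment_square a : ~ finite_type (seg a) -> inj_le (seg a * seg a) (seg a).
Proof.
  induction (urc_wf L lt HU a) as [a _ IH]. intros Hinf.
  destruct (classic (exists a', lt a' a /\ inj_le (seg a) (seg a'))) as [[a' [Ha' Hle]]|Hinit].
  - assert (Hinf' : ~ finite_type (seg a')).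
    { intros Hfin. exact (Hinf (finite_inj_le _ _ Hle Hfin)). }
    eapply inj_le_trans; [apply inj_le_prod; exact Hle|].
    eapply inj_le_trans; [exact (IH a' Ha' Hinf')|].
    apply inj_le_sig_incl. eauto.
  - apply segment_square_initial; eauto.
Qed.

Lemma small_equipotent_segment W :
  inj_le W L -> ~ inj_le L W -> exists c, inj_le W (seg c) /\ inj_le (seg c) W.
Proof.
  intros [f Hf] HLW.
  destruct (order_collapse W (fun x y => lt (f x) (f y))) as [g [Hmono Hdown]].
  - exact (wf_inverse_image _ _ lt f (urc_wf L lt HU)).
  - intros p q r. apply lt_trans.
  - intros p HL. apply (urc_initial L lt HU (f p)). eapply inj_le_trans; [exact HL|].
    exists (fun q => exist (fun z => lt z (f p)) (f (proj1_sig q)) (proj2_sig q)).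
    intros q q' E. apply sig_eq, Hf. exact (f_equal (@proj1_sig _ _) E).
  - assert (Hg_inj : forall x y, g x = g y -> x = y).
    { apply (strict_mono_injective _ (fun x y => lt (f x) (f y))); [|exact Hmono].
      intros x y. destruct (urc_total L lt HU (f x) (f y)) as [E|H]; auto. }
    destruct (small_image_bounded W g HLW) as [b Hb].
    destruct (exists_least (fun c => forall w, lt (g w) c)) as [c [Hc Hcmin]]; [eauto|].
    exists c. split.
    + exists (fun w => exist (fun z => lt z c) (g w) (Hc w)).
      intros x y E. apply Hg_inj. exact (f_equal (@proj1_sig _ _) E).
    + apply (inj_le_of_surj W _ (fun w => exist (fun z => lt z c) (g w) (Hc w))).
      intros [z Hz].
      destruct (classic (forall w, lt (g w) z)) as [Hall|Hn]; [destruct (Hcmin z Hall Hz)|].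
      apply not_all_ex_not in Hn. destruct Hn as [w Hw].
      destruct (not_lt_lte _ _ Hw) as [H| ->].
      * destruct (Hdown w z H) as [q [_ E]]. exists q. apply sig_eq. exact E.
      * exists w. apply sig_eq. reflexivity.
Qed.

Lemma inj_le_square W : inj_le W L -> ~ inj_le L W -> ~ finite_type W -> inj_le (W * W) W.
Proof.
  intros HWL HLW Hinf.
  destruct (small_equipotent_segment W HWL HLW) as [c [HWc HcW]].
  eapply inj_le_trans; [apply inj_le_prod; exact HWc|].
  eapply inj_le_trans; [|exact HcW].
  apply segment_square. intros Hfin. exact (Hinf (finite_inj_le _ _ HWc Hfin)).
Qed.

Section FiniteWidth.

Variable I : L -> Prop.
Hypothesis HI : forall a, exists b, I b /\ ~ lt b a.

Local Notation Ia := {a : L | I a}.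
Local Notation ltI x y := (lt (proj1_sig x) (proj1_sig y)).

Variables (T : Type) (S : Ia -> T -> Ia -> Prop).
Hypothesis HT : finite_type T.
Hypothesis Hconn : forall x y : Ia, ltI x y -> exists t, S x t y.

Definition unbounded (U : Ia -> Prop) : Prop := forall b, exists g, U g /\ lt b (proj1_sig g).

Definition common_successors (c : Ia -> T) (l : list Ia) (g : Ia) : Prop :=
  forall x, In x l -> S x (c x) g.

(* Stands in for a uniform ultrafilter on the levels. *)
Definition coherent_choice (c : Ia -> T) (x : Ia) (t : T) : Prop :=
  forall l, (forall y, In y l -> ltI y x) ->
    unbounded (fun g => S x t g /\ common_successors c l g).

Lemma levels_unbounded : unbounded (fun _ => True).
Proof.
  intros b. destruct (exists_gt b) as [c Hc]. destruct (HI c) as [g [Hg Hgc]].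
  exists (exist _ g Hg). split; [trivial|].
  exact (lt_lte_trans _ _ _ Hc (not_lt_lte _ _ Hgc)).
Qed.

Lemma list_max_level (x0 : Ia) (l : list Ia) :
  exists m, In m (x0 :: l) /\ forall x, In x (x0 :: l) -> lte (proj1_sig x) (proj1_sig m).
Proof.
  induction l as [|y l IH].
  - exists x0. split; [simpl; auto|]. intros x [<-|[]]. auto.
  - destruct IH as [m [Hm Hmax]].
    assert (Hold : forall x, In x (x0 :: y :: l) -> x <> y -> In x (x0 :: l)).
    { intros x [<-|[<-|Hx]] Hne; simpl; tauto. }
    destruct (classic (ltI m y)) as [Hmy|Hym].
    + exists y. split; [simpl; auto|].
      intros x Hx. destruct (classic (x = y)) as [->|Hne]; [auto|].
      left. exact (lte_lt_trans _ _ _ (Hmax x (Hold x Hx Hne)) Hmy).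
    + exists m. split; [simpl in *; tauto|].
      intros x Hx. destruct (classic (x = y)) as [->|Hne]; [exact (not_lt_lte _ _ Hym)|].
      exact (Hmax x (Hold x Hx Hne)).
Qed.

Lemma colors_inhabited : inhabited T.
Proof.
  destruct L_inhabited as [b].
  destruct (levels_unbounded b) as [x _].
  destruct (levels_unbounded (proj1_sig x)) as [y [_ Hxy]].
  destruct (Hconn x y Hxy) as [t _]. exact (inhabits t).
Qed.

(* The finitely many obstructions, one for each [t], are bounded, by regularity. *)
Lemma coherent_choice_exists (c : Ia -> T) (x : Ia) :
  (forall l, (forall y, In y l -> ltI y x) -> unbounded (common_successors c l)) ->
  exists t, coherent_choice c x t.
Proof.
  intros Hbelow. apply NNPP. intros Hnone.
  assert (Hbad : forall t, exists lb : list Ia * L, (forall y, In y (fst lb) -> ltI y x) /\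
            forall g, S x t g -> common_successors c (fst lb) g -> ~ lt (snd lb) (proj1_sig g)).
  { intros t. apply NNPP. intros Hn. apply Hnone. exists t. intros l Hl b. apply NNPP. intros Hn'.
    apply Hn. exists (l, b). split; [exact Hl|]. intros g H1 H2 H3. apply Hn'. eauto. }
  destruct (choice _ Hbad) as [lb Hlb].
  destruct (finite_image_bounded (option T)
              (fun o => match o with Some t => snd (lb t) | None => proj1_sig x end)
              (finite_option T HT)) as [b Hb].
  destruct HT as [lT HlT].
  set (l := flat_map (fun t => fst (lb t)) lT).
  destruct (Hbelow l) with b as [g [Hg Hbg]].
  { intros y Hy. apply in_flat_map in Hy. destruct Hy as [t [_ Hy]]. exact (proj1 (Hlb t) y Hy). }
  destruct (Hconn x g) as [t Ht]; [exact (lt_trans _ _ _ (Hb None) Hbg)|].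
  apply (proj2 (Hlb t) g Ht).
  - intros y Hy. apply Hg. apply in_flat_map. eauto.
  - exact (lt_trans _ _ _ (Hb (Some t)) Hbg).
Qed.

Lemma finite_coloring_unbounded_class (c : Ia -> T) : exists t, unbounded (fun x => c x = t).
Proof.
  apply NNPP. intros Hnone.
  assert (Hbound : forall t, exists b, forall x, c x = t -> ~ lt b (proj1_sig x)).
  { intros t. apply NNPP. intros Hn. apply Hnone. exists t. intros b. apply NNPP. intros Hn'.
    apply Hn. exists b. intros x Hx Hbx. apply Hn'. eauto. }
  destruct (choice _ Hbound) as [bt Hbt].
  destruct (finite_image_bounded T bt HT) as [b Hb].
  destruct (levels_unbounded b) as [x [_ Hx]].
  exact (Hbt (c x) x eq_refl (lt_trans _ _ _ (Hb (c x)) Hx)).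
Qed.

Section CoherentChoice.

Variable c : Ia -> T.
Hypothesis Hc : forall x, (exists t, coherent_choice c x t) -> coherent_choice c x (c x).

Lemma common_successors_unbounded (x : Ia) (l : list Ia) :
  (forall y, In y l -> lte (proj1_sig y) (proj1_sig x)) -> unbounded (common_successors c l).
Proof.
  revert l. induction (wf_inverse_image Ia _ lt (@proj1_sig _ _) (urc_wf L lt HU) x) as [x _ IH].
  assert (Hbelow : forall l, (forall y, In y l -> ltI y x) -> unbounded (common_successors c l)).
  { intros [|y0 l] Hl.
    - intros b. destruct (levels_unbounded b) as [g [_ Hg]].
      exists g. split; [intros y []|exact Hg].
    - destruct (list_max_level y0 l) as [m [Hm Hmax]]. exact (IH m (Hl m Hm) _ Hmax). }
  intros l Hl.
  set (l' := filter (fun y => if excluded_middle_informative (ltI y x) then true else false) l).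
  assert (Hl' : forall y, In y l' -> ltI y x).
  { intros y Hy. apply filter_In in Hy. destruct Hy as [_ Hy].
    destruct (excluded_middle_informative (ltI y x)); [assumption|discriminate]. }
  intros b. destruct (Hc x (coherent_choice_exists c x Hbelow) l' Hl' b) as [g [[Hxg Hg] Hbg]].
  exists g. split; [|exact Hbg]. intros y Hy.
  destruct (classic (ltI y x)) as [Hyx|Hyx].
  - apply Hg. apply filter_In. split; [exact Hy|].
    destruct (excluded_middle_informative (ltI y x)); tauto.
  - destruct (Hl y Hy) as [H|E]; [contradiction|]. apply sig_eq in E. subst y. exact Hxg.
Qed.

End CoherentChoice.

Lemma coherent_unbounded_family :
  exists t (A : Ia -> Prop), unbounded A /\
    forall x y, A x -> A y -> exists g, S x t g /\ S y t g.
Proof.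
  destruct (wf_recursive_choice Ia T (fun x y => ltI x y) coherent_choice) as [c Hc].
  - exact (wf_inverse_image Ia _ lt (@proj1_sig _ _) (urc_wf L lt HU)).
  - exact colors_inhabited.
  - intros c c' x t Hcc' Hct l Hl b. destruct (Hct l Hl b) as [g [[Hxg Hg] Hbg]].
    exists g. split; [split; [exact Hxg|]|exact Hbg].
    intros y Hy. rewrite <- Hcc'; auto.
  - destruct (finite_coloring_unbounded_class c) as [t Ht].
    exists t, (fun x => c x = t). split; [exact Ht|].
    intros x y Hx Hy.
    assert (Hpair : exists z : Ia, forall w, In w (x :: y :: nil) -> lte (proj1_sig w) (proj1_sig z)).
    { destruct (classic (ltI x y)) as [H|H]; [exists y|exists x];
        intros w [<-|[<-|[]]]; auto using not_lt_lte. }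
    destruct Hpair as [z Hz].
    destruct (common_successors_unbounded c Hc z _ Hz (proj1_sig z)) as [g [Hg _]].
    exists g. split; [rewrite <- Hx|rewrite <- Hy]; apply Hg; simpl; auto.
Qed.

End FiniteWidth.

Lemma finite_width_cofinal_branch I K Rs :
  lambda_system L lt I K Rs -> finite_type K -> finite_type {R | Rs R} ->
  has_cofinal_branch L lt I K Rs.
Proof.
  intros [_ [_ [_ [_ [HI [HRs Hconn]]]]]] HK HRfin.
  destruct (coherent_unbounded_family I HI (K * {R | Rs R} * K)
              (fun x t g => proj1_sig (snd (fst t)) (x, fst (fst t)) (g, snd t)))
    as [[[k r] j] [A [HA Hcoh]]].
  - apply finite_prod; [apply finite_prod|]; assumption.
  - intros x y Hxy. destruct (Hconn x y Hxy) as [b0 [b1 [R [HR HRel]]]].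
    exists (b0, exist _ R HR, b1). exact HRel.
  - exists (proj1_sig r). split; [exact (proj2_sig r)|].
    exists (fun p => A (fst p) /\ snd p = k). split.
    + intros [x k1] [y k2] [Hx E1] [Hy E2]. simpl in *. subst k1 k2.
      destruct (Hcoh x y Hx Hy) as [g [Hxg Hyg]].
      destruct (HRs _ (proj2_sig r)) as [_ [Htree _]]. exact (Htree _ _ _ Hxg Hyg).
    + intros a. destruct (HA a) as [x [Hx Hax]]. exists (x, k). split; [auto|].
      apply lt_asym. exact Hax.
Qed.

Lemma singleton_card_lt X (x : X) : card_lt {y | y = x} L.
Proof.
  split.
  - destruct L_inhabited as [a]. exists (fun _ => a).
    intros [y Hy] [z Hz] _. apply sig_eq. simpl. congruence.
  - intros HL. apply L_not_finite. apply (finite_inj_le _ _ HL).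
    exists (exist (fun y => y = x) x eq_refl :: nil). intros [y Hy]. left. apply sig_eq. simpl. auto.
Qed.

Section Amalgam.

Variables (I : L -> Prop) (K K' : Type) (Rs : (node L I K -> node L I K -> Prop) -> Prop).
Variable e : K * {R | Rs R} -> K'.
Hypothesis He : forall x y, e x = e y -> x = y.

(* The node [(a, e (k, R))] plays the role of the node [(a, k)] of the relation [R]. *)
Definition amalgam (p q : node L I K') : Prop :=
  exists k1 k2 (r : {R | Rs R}),
    snd p = e (k1, r) /\ snd q = e (k2, r) /\ proj1_sig r (fst p, k1) (fst q, k2).

Lemma amalgam_code_l p q k r :
  snd p = e (k, r) -> amalgam p q -> exists k2, snd q = e (k2, r) /\ proj1_sig r (fst p, k) (fst q, k2).
Proof.
  intros Ep [k1 [k2 [r' [E1 [E2 Hr]]]]]. rewrite Ep in E1. apply He in E1.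
  injection E1 as -> ->. eauto.
Qed.

Lemma amalgam_code_r p q k r :
  snd q = e (k, r) -> amalgam p q -> exists k1, snd p = e (k1, r) /\ proj1_sig r (fst p, k1) (fst q, k).
Proof.
  intros Eq [k1 [k2 [r' [E1 [E2 Hr]]]]]. rewrite Eq in E2. apply He in E2.
  injection E2 as -> ->. eauto.
Qed.

Lemma amalgam_transitive : (forall R, Rs R -> transitive_rel R) -> transitive_rel amalgam.
Proof.
  intros Htrans p q s [k1 [k2 [r [E1 [E2 Hpq]]]]] Hqs.
  destruct (amalgam_code_l q s k2 r E2 Hqs) as [k3 [E3 Hqs']].
  exists k1, k3, r. repeat split; auto. exact (Htrans _ (proj2_sig r) _ _ _ Hpq Hqs').
Qed.

Lemma amalgam_tree_like : (forall R, Rs R -> tree_like R) -> tree_like amalgam.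
Proof.
  intros Htree p q s [k1 [k3 [r [E1 [E3 Hps]]]]] Hqs.
  destruct (amalgam_code_r q s k3 r E3 Hqs) as [k2 [E2 Hqs']].
  destruct (Htree _ (proj2_sig r) _ _ _ Hps Hqs') as [E|[H|H]].
  - left. destruct p, q. simpl in *. injection E as -> ->. congruence.
  - right; left. exists k1, k2, r. auto.
  - right; right. exists k2, k1, r. auto.
Qed.

Lemma amalgam_levels :
  (forall R, Rs R -> forall p q, R p q -> lt (level p) (level q)) ->
  forall p q, amalgam p q -> lt (level p) (level q).
Proof. intros Hlev p q [k1 [k2 [r [_ [_ H]]]]]. exact (Hlev _ (proj2_sig r) _ _ H). Qed.

Lemma lambda_system_amalgam :
  lambda_system L lt I K Rs -> card_lt K' L -> lambda_system L lt I K' (fun R => R = amalgam).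
Proof.
  intros (HK & _ & Hinh & _ & HI & HRs & Hconn) HK'L.
  destruct HK as [k0], Hinh as [r0].
  split; [exact (inhabits (e (k0, r0)))|].
  split; [exact HK'L|].
  split; [exact (inhabits (exist _ amalgam eq_refl))|].
  split; [apply singleton_card_lt|].
  split; [exact HI|].
  split.
  - intros R ->. split; [|split].
    + apply amalgam_transitive. intros R HR. exact (proj1 (HRs R HR)).
    + apply amalgam_tree_like. intros R HR. exact (proj1 (proj2 (HRs R HR))).
    + apply amalgam_levels. intros R HR. exact (proj2 (proj2 (HRs R HR))).
  - intros a0 a1 Hlt. destruct (Hconn a0 a1 Hlt) as [b0 [b1 [R [HR HRel]]]].
    exists (e (b0, exist _ R HR)), (e (b1, exist _ R HR)), amalgam. split; [reflexivity|].
    exists b0, b1, (exist _ R HR). auto.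
Qed.

(* A cofinal branch of the amalgam only meets nodes coded with one relation [r0]. *)
Lemma amalgam_cofinal_branch :
  has_cofinal_branch L lt I K' (fun R => R = amalgam) -> has_cofinal_branch L lt I K Rs.
Proof.
  intros [R [-> [B [Hcomp Hcof]]]].
  assert (Hcode : forall p, B p -> exists k r, snd p = e (k, r)).
  { intros p Hp. destruct (exists_gt (level p)) as [c Hc].
    destruct (Hcof c) as [q [Hq Hqc]].
    destruct (Hcomp p q Hp Hq) as [<-|[[k1 [k2 [r [E _]]]]|[k1 [k2 [r [_ [E _]]]]]]]; eauto.
    contradiction. }
  assert (Hsame : forall p q k r k' r', B p -> B q -> snd p = e (k, r) -> snd q = e (k', r') -> r = r').
  { intros p q k r k' r' Hp Hq Ep Eq.
    destruct (Hcomp p q Hp Hq) as [<-|[Hpq|Hqp]].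
    - rewrite Ep in Eq. apply He in Eq. congruence.
    - destruct (amalgam_code_l p q k r Ep Hpq) as [k2 [Eq' _]].
      rewrite Eq in Eq'. apply He in Eq'. congruence.
    - destruct (amalgam_code_l q p k' r' Eq Hqp) as [k2 [Ep' _]].
      rewrite Ep in Ep'. apply He in Ep'. congruence. }
  destruct L_inhabited as [a0]. destruct (Hcof a0) as [p0 [Hp0 _]].
  destruct (Hcode p0 Hp0) as [k0 [r0 E0]].
  exists (proj1_sig r0). split; [exact (proj2_sig r0)|].
  exists (fun x : node L I K => B (fst x, e (snd x, r0))). split.
  - intros [x k] [y k'] Hx Hy. simpl in *.
    destruct (Hcomp _ _ Hx Hy) as [E|[Hxy|Hyx]].
    + left. injection E as -> E. apply He in E. congruence.
    + destruct (amalgam_code_l (x, e (k, r0)) _ k r0 eq_refl Hxy) as [k2 [E Hr]].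
      simpl in E. apply He in E. injection E as ->. auto.
    + destruct (amalgam_code_l (y, e (k', r0)) _ k' r0 eq_refl Hyx) as [k2 [E Hr]].
      simpl in E. apply He in E. injection E as ->. auto.
  - intros a. destruct (Hcof a) as [p [Hp Hpa]]. destruct (Hcode p Hp) as [k [r Er]].
    rewrite (Hsame p p0 k r k0 r0 Hp Hp0 Er E0) in Er.
    exists (fst p, k). split; [|exact Hpa]. simpl. rewrite <- Er. destruct p. exact Hp.
Qed.

End Amalgam.

End RegularCardinal.

Theorem mainTheorem14
  (L : Type) (lt : L -> L -> Prop) (I : L -> Prop) (K : Type)
  (Rs : (node L I K -> node L I K -> Prop) -> Prop) (K' : Type) :
  uncountable_regular_cardinal L lt ->
  lambda_system L lt I K Rs ->
  ~ has_cofinal_branch L lt I K Rs ->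
  card_is_max K' K {R | Rs R} ->
  exists Rs' : (node L I K' -> node L I K' -> Prop) -> Prop,
    lambda_system L lt I K' Rs' /\
    ~ has_cofinal_branch L lt I K' Rs' /\
    (exists R0, forall R, Rs' R <-> R = R0).
Proof.
  intros HU HS Hnb [HKK' [HRK' HK'max]].
  assert (HK'L : card_lt K' L).
  { destruct HS as (_ & [HKL HLK] & _ & [HRL HLR] & _). split.
    - destruct HK'max; eapply inj_le_trans; eauto.
    - intros HLK'. destruct HK'max; [apply HLK|apply HLR]; eapply inj_le_trans; eauto. }
  destruct (classic (finite_type K')) as [Hfin|Hinf].
  - destruct Hnb. apply (finite_width_cofinal_branch L lt HU I K Rs HS);
      eapply finite_inj_le; eassumption.
  - assert (Hcode : inj_le (K * {R | Rs R}) K').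
    { eapply inj_le_trans; [exact (inj_le_prod _ _ _ _ HKK' HRK')|].
      exact (inj_le_square L lt HU K' (proj1 HK'L) (proj2 HK'L) Hinf). }
    destruct Hcode as [e He].
    exists (fun R => R = amalgam L I K K' Rs e). split; [|split].
    + exact (lambda_system_amalgam L lt HU I K K' Rs e He HS HK'L).
    + intros Hbranch. exact (Hnb (amalgam_cofinal_branch L lt HU I K K' Rs e He Hbranch)).
    + exists (amalgam L I K K' Rs e). intros R. apply iff_refl.
Qed.
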